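(* Let $F$ be a safe sentence, let $I$ be an interpretation of the object and predicate constants occurring in $F$, and let $X$ be any superset of the universe of $I$. Then the extension of $I$ to $X$ is a stable model of $F$ if and only if $I$ is a stable model of $F$.
   Context: Formulas are first-order formulas over a signature with object constants, predicate constants and equality, but no function constants of arity $>0$. Primitive connectives are $\bot,\land,\lor,\rightarrow$, quantifiers $\forall,\exists$; $\neg G$ is $G\rightarrow\bot$, $\top$ is $\bot\rightarrow\bot$, $G\leftrightarrow H$ is $(G\rightarrow H)\land(H\rightarrow G)$. A sentence is a formula without free variables. Stable models: for a sentence $F$, let $\mathbf p=p_1,\dots,p_n$ be all predicate constants occurring in $F$ and $\mathbf u=u_1,\dots,u_n$ distinct predicate variables with matching arities. $\mathbf u\le\mathbf p$ is $\bigwedge_i\forall\mathbf x(u_i(\mathbf x)\rightarrow p_i(\mathbf x))$, $\mathbf u=\mathbf p$ is $\bigwedge_i\forall\mathbf x(u_i(\mathbf x)\leftrightarrow p_i(\mathbf x))$, $\mathbf u<\mathbf p$ is $(\mathbf u\le\mathbf p)\land\neg(\mathbf u=\mathbf p)$. $F^*(\mathbf u)$: $p_i(\mathbf t)^*=u_i(\mathbf t)$; $(t_1=t_2)^*=(t_1=t_2)$; $\bot^*=\bot$; $(G\land H)^*=G^*\land H^*$; $(G\lor H)^*=G^*\lor H^*$; $(G\rightarrow H)^*=(G^*\rightarrow H^* )\land(G\rightarrow H)$; $(\forall xG)^*=\forall xG^*$; $(\exists xG)^*=\exists xG^*$. $\mathrm{SM}[F]$ is $F\land\neg\exists\mathbf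 u((\mathbf u<\mathbf p)\land F^*(\mathbf u))$. An interpretation of the object and predicate constants occurring in $F$ is a stable model of $F$ if it satisfies $\mathrm{SM}[F]$. Extension: if $I$ is an interpretation of a set of object and predicate constants and $X$ is a superset of the universe of $I$, the extension of $I$ to $X$ is the interpretation of the same constants with universe $X$ in which each object constant denotes the same object as in $I$ and each predicate constant denotes the same set of tuples as in $I$. Restricted variables: for quantifier-free $G$, $\mathrm{RV}(G)$ is: $\emptyset$ if $G$ is an equality between two variables; the set of variables of $G$ if $G$ is any other atomic formula; $\mathrm{RV}(\bot)=\emptyset$; $\mathrm{RV}(G\land H)=\mathrm{RV}(G)\cup\mathrm{RV}(H)$; $\mathrm{RV}(G\lor H)=\mathrm{RV}(G)\cap\mathrm{RV}(H)$; $\mathrm{RV}(G\rightarrow H)=\emptyset$. An occurrence of a subformula or variable is positive if the number of implications containing it in their antecedent is even, negative otherwise, and strictly positive if it is in the antecedent of no implication. A prenex sentence $Q_1x_1\cdots Q_nx_nM$ ($M$ quantifier-free, $x_i$ distinct) is semi-safe if every strictly positive occurrence of every $x_i$ in $M$ belongs to a subformula $G\rightarrow H$ with $x_i\in\mathrm{RV}(G)$. Simplification transformations: $\neg\bot\mapsto\top$, $\neg\top\mapsto\bot$; $\bot\land G\mapsto\bot$, $G\land\bot\mapsto\bot$, $\top\land G\mapsto G$, $G\land\top\mapsto G$; $\bot\lor G\mapsto G$, $G\lor\bot\mapsto G$, $\top\lor G\mapsto\top$, $G\lor\top\mapsto\top$; $\bot\rightarrow G\mapsto\top$, $G\rightarrow\top\mapsto\top$,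 $\top\rightarrow G\mapsto G$. A variable $x$ is positively (resp. negatively) weakly restricted in a quantifier-free formula $G$ if the formula obtained from $G$ by first replacing every atomic formula $A$ of $G$ with $x\in\mathrm{RV}(A)$ by $\bot$ and then applying the simplification transformations is $\top$ (resp. $\bot$). A semi-safe prenex sentence $Q_1x_1\cdots Q_nx_nM$ is safe if for every occurrence of every variable $x_i$: (a) if $Q_i=\forall$, the occurrence belongs to a positive subformula (of the sentence) in which $x_i$ is positively weakly restricted, or to a negative subformula in which $x_i$ is negatively weakly restricted; (b) if $Q_i=\exists$, the occurrence belongs to a negative subformula in which $x_i$ is positively weakly restricted, or to a positive subformula in which $x_i$ is negatively weakly restricted. *)

From Stdlib Require Import List Arith PeanoNat.
Import ListNotations.
Set Implicit Arguments.

(** Variables and object constants are named by natural numbers.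
    A predicate constant is a pair (name, arity). *)
Definition pconst := (nat * nat)%type.

Inductive term : Type :=
| TVar (x : nat)
| TCst (c : nat).

(** Predicate symbols: predicate constants, and the predicate variables
    [PVar p] (the variable u_i matching the constant p_i, same arity),
    which are only used to build F*(u). *)
Inductive psym : Type :=
| PConst (p : pconst)
| PVar (p : pconst).

Inductive quant : Type := QAll | QEx.

Inductive formula : Type :=
| FBot
| FPred (P : psym) (ts : list term)
| FEq (t1 t2 : term)
| FAnd (G H : formula)
| FOr (G H : formula)
| FImp (G H : formula)
| FQ (q : quant) (x : nat) (G : formula).

Definition FTop : formula := FImp FBot FBot.

Definition term_vars (t : term) : list nat :=
  match t with TVar x => [x] | TCst _ => [] end.

Fixpoint free_vars (F : formula) : list nat :=
  match F with
  | FBot => []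
  | FPred _ ts => flat_map term_vars ts
  | FEq t1 t2 => term_vars t1 ++ term_vars t2
  | FAnd G H | FOr G H | FImp G H => free_vars G ++ free_vars H
  | FQ _ x G => filter (fun y => negb (Nat.eqb y x)) (free_vars G)
  end.

Definition sentence (F : formula) : Prop := free_vars F = [].

Fixpoint wf_formula (F : formula) : Prop :=
  match F with
  | FBot => True
  | FPred (PConst p) ts => length ts = snd p
  | FPred (PVar _) _ => False
  | FEq _ _ => True
  | FAnd G H | FOr G H | FImp G H => wf_formula G /\ wf_formula H
  | FQ _ _ G => wf_formula G
  end.

Fixpoint preds (F : formula) : list pconst :=
  match F with
  | FPred (PConst p) _ => [p]
  | FAnd G H | FOr G H | FImp G H => preds G ++ preds H
  | FQ _ _ G => preds G
  | _ => []
  end.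

Fixpoint star (F : formula) : formula :=
  match F with
  | FBot => FBot
  | FPred (PConst p) ts => FPred (PVar p) ts
  | FPred (PVar p) ts => FPred (PVar p) ts
  | FEq t1 t2 => FEq t1 t2
  | FAnd G H => FAnd (star G) (star H)
  | FOr G H => FOr (star G) (star H)
  | FImp G H => FAnd (FImp (star G) (star H)) (FImp G H)
  | FQ q x G => FQ q x (star G)
  end.

(** An interpretation has as universe a subset [dom] of an ambient type [U]
    (this makes "extension to a superset X of the universe" expressible). *)
Record interp (U : Type) : Type := Interp {
  dom : U -> Prop;
  cst : nat -> U;
  rel : pconst -> list U -> Prop
}.
Arguments Interp {U}.

Definition tuple_of {U} (D : U -> Prop) (p : pconst) (xs : list U) : Prop :=
  length xs = snd p /\ Forall D xs.

Definition wf_interp {U} (I : interp U) : Prop :=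
  (exists d, dom I d) /\
  (forall c, dom I (cst I c)) /\
  (forall p xs, rel I p xs -> tuple_of (dom I) p xs).

Definition extension {U} (I : interp U) (X : U -> Prop) : interp U :=
  Interp X (cst I) (rel I).

Definition upd {U} (rho : nat -> U) (x : nat) (d : U) : nat -> U :=
  fun y => if Nat.eqb y x then d else rho y.

Definition eval_term {U} (I : interp U) (rho : nat -> U) (t : term) : U :=
  match t with TVar x => rho x | TCst c => cst I c end.

Fixpoint sat {U} (I : interp U) (u : pconst -> list U -> Prop)
    (rho : nat -> U) (F : formula) : Prop :=
  match F with
  | FBot => False
  | FPred (PConst p) ts => rel I p (map (eval_term I rho) ts)
  | FPred (PVar p) ts => u p (map (eval_term I rho) ts)
  | FEq t1 t2 => eval_term I rho t1 = eval_term I rho t2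
  | FAnd G H => sat I u rho G /\ sat I u rho H
  | FOr G H => sat I u rho G \/ sat I u rho H
  | FImp G H => sat I u rho G -> sat I u rho H
  | FQ QAll x G => forall d, dom I d -> sat I u (upd rho x d) G
  | FQ QEx x G => exists d, dom I d /\ sat I u (upd rho x d) G
  end.

Definition holds {U} (I : interp U) (u : pconst -> list U -> Prop)
    (F : formula) : Prop :=
  forall rho, (forall n, dom I (rho n)) -> sat I u rho F.

Definition u_le {U} (I : interp U) (F : formula) (u : pconst -> list U -> Prop) :=
  forall p, In p (preds F) ->
    forall xs, tuple_of (dom I) p xs -> u p xs -> rel I p xs.
Definition u_eq {U} (I : interp U) (F : formula) (u : pconst -> list U -> Prop) :=
  forall p, In p (preds F) ->
    forall xs, tuple_of (dom I) p xs -> (u p xs <-> rel I p xs).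
Definition u_lt {U} (I : interp U) (F : formula) (u : pconst -> list U -> Prop) :=
  u_le I F u /\ ~ u_eq I F u.

Definition stable_model {U} (I : interp U) (F : formula) : Prop :=
  holds I (fun _ _ => False) F /\
  ~ exists u : pconst -> list U -> Prop,
      (forall p xs, u p xs -> tuple_of (dom I) p xs) /\
      u_lt I F u /\ holds I u (star F).

Fixpoint inRV (x : nat) (G : formula) : Prop :=
  match G with
  | FBot => False
  | FEq (TVar _) (TVar _) => False
  | FEq t1 t2 => In x (term_vars t1 ++ term_vars t2)
  | FPred _ ts => In x (flat_map term_vars ts)
  | FAnd G H => inRV x G \/ inRV x H
  | FOr G H => inRV x G /\ inRV x H
  | FImp _ _ => False
  | FQ _ _ _ => False
  end.

Fixpoint qfree (F : formula) : Prop :=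
  match F with
  | FAnd G H | FOr G H | FImp G H => qfree G /\ qfree H
  | FQ _ _ _ => False
  | _ => True
  end.

Fixpoint repl (x : nat) (G : formula) : formula :=
  match G with
  | FBot => FBot
  | FPred P ts => if in_dec Nat.eq_dec x (flat_map term_vars ts) then FBot else G
  | FEq (TVar _) (TVar _) => G
  | FEq t1 t2 => if in_dec Nat.eq_dec x (term_vars t1 ++ term_vars t2) then FBot else G
  | FAnd G H => FAnd (repl x G) (repl x H)
  | FOr G H => FOr (repl x G) (repl x H)
  | FImp G H => FImp (repl x G) (repl x H)
  | FQ q y G => FQ q y (repl x G)
  end.

(** Exhaustive application of the simplification transformations
    (computed bottom-up; the result is the normal form). *)
Fixpoint simp (G : formula) : formula :=
  match G with
  | FAnd G H =>
      let a := simp G in let b := simp H in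
      match a, b with
      | FBot, _ => FBot
      | _, FBot => FBot
      | FImp FBot FBot, _ => b
      | _, FImp FBot FBot => a
      | _, _ => FAnd a b
      end
  | FOr G H =>
      let a := simp G in let b := simp H in
      match a, b with
      | FBot, _ => b
      | _, FBot => a
      | FImp FBot FBot, _ => FTop
      | _, FImp FBot FBot => FTop
      | _, _ => FOr a b
      end
  | FImp G H =>
      let a := simp G in let b := simp H in
      match a, b with
      | FBot, _ => FTop                  (* bot -> G  ~> top ; also not-bot ~> top *)
      | _, FImp FBot FBot => FTop
      | FImp FBot FBot, _ => b           (* top -> G  ~> G ; also not-top ~> bot *)
      | _, _ => FImp a b
      end
  | FQ q y G => FQ q y (simp G)
  | _ => G
  end.

Definition pos_weakly_restricted (x : nat) (G : formula) : Prop :=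
  simp (repl x G) = FTop.
Definition neg_weakly_restricted (x : nat) (G : formula) : Prop :=
  simp (repl x G) = FBot.

(** Positions of subformula occurrences: paths from the root. *)
Inductive dir : Type := DL | DR | DQ.

Fixpoint subf_at (F : formula) (p : list dir) : option formula :=
  match p, F with
  | [], _ => Some F
  | DL :: p', (FAnd G _ | FOr G _ | FImp G _) => subf_at G p'
  | DR :: p', (FAnd _ H | FOr _ H | FImp _ H) => subf_at H p'
  | DQ :: p', FQ _ _ G => subf_at G p'
  | _, _ => None
  end.

Fixpoint ante_count (F : formula) (p : list dir) : nat :=
  match p, F with
  | DL :: p', FImp G _ => S (ante_count G p')
  | DL :: p', (FAnd G _ | FOr G _) => ante_count G p'
  | DR :: p', (FAnd _ H | FOr _ H | FImp _ H) => ante_count H p'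
  | DQ :: p', FQ _ _ G => ante_count G p'
  | _, _ => 0
  end.

Definition atom_vars (A : formula) : option (list nat) :=
  match A with
  | FPred _ ts => Some (flat_map term_vars ts)
  | FEq t1 t2 => Some (term_vars t1 ++ term_vars t2)
  | _ => None
  end.

Definition occurs_at (M : formula) (p : list dir) (x : nat) : Prop :=
  exists A vs, subf_at M p = Some A /\ atom_vars A = Some vs /\ In x vs.

Definition prenex (F : formula) (qs : list (quant * nat)) (M : formula) : Prop :=
  F = fold_right (fun qx G => FQ (fst qx) (snd qx) G) M qs /\
  qfree M /\ NoDup (map snd qs).

Definition semi_safe_prefix (qs : list (quant * nat)) (M : formula) : Prop :=
  forall qx, In qx qs -> forall p, occurs_at M p (snd qx) ->
    ante_count M p = 0 ->
    exists q r G H, p = q ++ r /\ subf_at M q = Some (FImp G H) /\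
                    inRV (snd qx) G.

Definition semi_safe (F : formula) : Prop :=
  sentence F /\ exists qs M, prenex F qs M /\ semi_safe_prefix qs M.

Definition safe (F : formula) : Prop :=
  sentence F /\ exists qs M, prenex F qs M /\ semi_safe_prefix qs M /\
  forall qx, In qx qs -> forall p, occurs_at M p (snd qx) ->
    exists q r G, p = q ++ r /\ subf_at M q = Some G /\
      match fst qx with
      | QAll =>
          (Nat.even (ante_count M q) = true /\ pos_weakly_restricted (snd qx) G) \/
          (Nat.odd (ante_count M q) = true /\ neg_weakly_restricted (snd qx) G)
      | QEx =>
          (Nat.odd (ante_count M q) = true /\ pos_weakly_restricted (snd qx) G) \/
          (Nat.even (ante_count M q) = true /\ neg_weakly_restricted (snd qx) G)
      end.

From Stdlib Require Import List Arith PeanoNat Bool Classical.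
Import ListNotations.

(* Only quantifiers see the universe, so it suffices to show that in the prenex
   forms of F and of F*(u), for every u below the predicates of I, the
   quantifiers may range over X instead of the universe of I.  Give a bound
   variable x a value outside the universe: every atom restricting x becomes
   false, because the relations of I, the candidate u and the constants all
   live in the universe.  Hence each subformula that safety makes weakly
   restricted in x collapses to top or bottom, in the matrix M and in M* alike:
   the simplifications preserve the here-and-there value of a formula G, that
   is, the truth values of G* and of G.  Safety puts every occurrence of x
   inside such a subformula of the right polarity, so an outside value makes M
   and M* at least as true as an inside one if x is universal, and at most as
   true if x is existential: outside values never change the truth of the
   sentence.
   Finally the competitors u in SM[F] can be cut down to u /\ p without
   changing F*(u), so both sides quantify over the same u. *)

Notation quantify qs M := (fold_right (fun qx G => FQ (fst qx) (snd qx) G) M qs).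

Definition universal (q : quant) : bool :=
  match q with QAll => true | QEx => false end.

Definition oriented (s : bool) (P Q : Prop) : Prop :=
  if s then P -> Q else Q -> P.

Definition agree_off {U} (x : nat) (ra rb : nat -> U) : Prop :=
  forall y, y <> x -> ra y = rb y.

Definition below {U} (I : interp U) (u : pconst -> list U -> Prop) : Prop :=
  forall p xs, u p xs -> rel I p xs.

Definition ht_equiv {U} (I : interp U) u rho (A B : formula) : Prop :=
  (sat I u rho A <-> sat I u rho B) /\
  (sat I u rho (star A) <-> sat I u rho (star B)).

Definition wrestricted (s : bool) (x : nat) (G : formula) : Prop :=
  simp (repl x G) = if s then FTop else FBot.

(* Clause (a)/(b) of safety for a variable bound by [Q], with
   [s = universal Q]: [Bool.eqb s (Nat.even n)] selects positive rather than
   negative weak restriction at a subformula under [n] antecedents. *)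
Definition guarded (s : bool) (x : nat) (M : formula) : Prop :=
  forall r, occurs_at M r x ->
    exists r1 r2 G, r = r1 ++ r2 /\ subf_at M r1 = Some G /\
      wrestricted (Bool.eqb s (Nat.even (ante_count M r1))) x G.

Lemma fv_star G y : In y (free_vars (star G)) -> In y (free_vars G).
Proof.
  induction G; simpl; rewrite ?in_app_iff, ?filter_In; try tauto.
  destruct P; simpl; auto.
Qed.

Lemma qfree_star N : qfree N -> qfree (star N).
Proof. induction N; simpl; try tauto. destruct P; simpl; auto. Qed.

Lemma star_quantify qs M : star (quantify qs M) = quantify qs (star M).
Proof. induction qs; simpl; congruence. Qed.

Lemma sentence_star G : sentence G -> sentence (star G).
Proof.
  unfold sentence. intro HG. destruct (free_vars (star G)) as [|y l] eqn:E; auto.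
  assert (Hy : In y (free_vars G)) by (apply fv_star; rewrite E; left; auto).
  rewrite HG in Hy. contradiction.
Qed.

Lemma eqb_even_succ s n : Bool.eqb s (Nat.even (S n)) = Bool.eqb (negb s) (Nat.even n).
Proof. rewrite Nat.even_succ, <- Nat.negb_even. destruct s, (Nat.even n); reflexivity. Qed.

Lemma subf_at_nil N : subf_at N [] = Some N.
Proof. destruct N; reflexivity. Qed.

Lemma ante_count_nil N : ante_count N [] = 0.
Proof. destruct N; reflexivity. Qed.

Lemma guarded_child s s' x N C d :
  ~ wrestricted s x N ->
  (forall r, subf_at N (d :: r) = subf_at C r) ->
  (forall r, Bool.eqb s (Nat.even (ante_count N (d :: r))) =
             Bool.eqb s' (Nat.even (ante_count C r))) ->
  guarded s x N -> guarded s' x C.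
Proof.
  intros Hn Hs Ha Hg r (A & vs & HA & Hvs).
  destruct (Hg (d :: r)) as ([|d' r1] & r2 & G & E & HG & W).
  { exists A, vs. rewrite Hs. auto. }
  - rewrite subf_at_nil in HG. injection HG as <-. rewrite ante_count_nil in W.
    destruct s; contradiction (Hn W).
  - injection E as <- E. exists r1, r2, G. rewrite <- Hs, <- Ha. auto.
Qed.

Lemma guarded_atom {s x A vs} :
  ~ wrestricted s x A -> guarded s x A -> atom_vars A = Some vs -> ~ In x vs.
Proof.
  intros Hn Hg Hv Hin.
  destruct (Hg []) as ([|d r1] & r2 & G & E & HG & W);
    [exists A, vs; rewrite subf_at_nil; auto | | discriminate].
  rewrite subf_at_nil in HG. injection HG as <-. rewrite ante_count_nil in W.
  destruct s; contradiction (Hn W).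
Qed.

Lemma guarded_and {s x N1 N2} :
  ~ wrestricted s x (FAnd N1 N2) -> guarded s x (FAnd N1 N2) ->
  guarded s x N1 /\ guarded s x N2.
Proof.
  intros W Hg. split.
  - exact (guarded_child s s x _ N1 DL W (fun _ => eq_refl) (fun _ => eq_refl) Hg).
  - exact (guarded_child s s x _ N2 DR W (fun _ => eq_refl) (fun _ => eq_refl) Hg).
Qed.

Lemma guarded_or {s x N1 N2} :
  ~ wrestricted s x (FOr N1 N2) -> guarded s x (FOr N1 N2) ->
  guarded s x N1 /\ guarded s x N2.
Proof.
  intros W Hg. split.
  - exact (guarded_child s s x _ N1 DL W (fun _ => eq_refl) (fun _ => eq_refl) Hg).
  - exact (guarded_child s s x _ N2 DR W (fun _ => eq_refl) (fun _ => eq_refl) Hg).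
Qed.

Lemma guarded_imp {s x N1 N2} :
  ~ wrestricted s x (FImp N1 N2) -> guarded s x (FImp N1 N2) ->
  guarded (negb s) x N1 /\ guarded s x N2.
Proof.
  intros W Hg. split.
  - exact (guarded_child s (negb s) x _ N1 DL W (fun _ => eq_refl)
                          (fun _ => eqb_even_succ s _) Hg).
  - exact (guarded_child s s x _ N2 DR W (fun _ => eq_refl) (fun _ => eq_refl) Hg).
Qed.

Lemma oriented_iff s (P Q : Prop) : (P <-> Q) -> oriented s P Q.
Proof. destruct s; simpl; tauto. Qed.

Lemma sat_ext {U} (I : interp U) u G : forall rho1 rho2,
  (forall y, In y (free_vars G) -> rho1 y = rho2 y) ->
  (sat I u rho1 G <-> sat I u rho2 G).
Proof.
  assert (Hts : forall rho1 rho2 ts,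
    (forall y, In y (flat_map term_vars ts) -> rho1 y = rho2 y) ->
    map (eval_term I rho1) ts = map (eval_term I rho2) ts).
  { intros rho1 rho2 ts H. apply map_ext_in. intros [y|c] Ht; simpl; auto.
    apply H, in_flat_map. exists (TVar y). simpl; auto. }
  induction G; intros rho1 rho2 H; simpl in *.
  4-6: rewrite (IHG1 rho1 rho2), (IHG2 rho1 rho2); [tauto | |];
         intros y Hy; apply H, in_or_app; auto.
  - tauto.
  - destruct P; rewrite (Hts rho1 rho2 ts H); tauto.
  - assert (E := Hts rho1 rho2 [t1; t2]). simpl in E. rewrite app_nil_r in E.
    injection (E H) as -> ->. tauto.
  - assert (E : forall d, sat I u (upd rho1 x d) G <-> sat I u (upd rho2 x d) G).
    { intro d. apply IHG. intros y Hy. unfold upd.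
      destruct (Nat.eqb y x) eqn:Ey; auto.
      apply H, filter_In. rewrite Ey. auto. }
    destruct q; setoid_rewrite E; tauto.
Qed.

Section HereThere.

Variables (U : Type) (I : interp U) (u : pconst -> list U -> Prop).
Hypothesis Hu : below I u.

Lemma sat_star_sat G : forall rho, sat I u rho (star G) -> sat I u rho G.
Proof.
  induction G; intro rho; simpl; try tauto.
  - destruct P; simpl; auto.
  - firstorder.
  - firstorder.
  - destruct q; firstorder.
Qed.

Lemma ht_and rho A A' B B' :
  ht_equiv I u rho A A' -> ht_equiv I u rho B B' ->
  ht_equiv I u rho (FAnd A B) (FAnd A' B').
Proof. unfold ht_equiv; simpl; tauto. Qed.

Lemma ht_or rho A A' B B' :
  ht_equiv I u rho A A' -> ht_equiv I u rho B B' ->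
  ht_equiv I u rho (FOr A B) (FOr A' B').
Proof. unfold ht_equiv; simpl; tauto. Qed.

Lemma ht_imp rho A A' B B' :
  ht_equiv I u rho A A' -> ht_equiv I u rho B B' ->
  ht_equiv I u rho (FImp A B) (FImp A' B').
Proof. unfold ht_equiv; simpl; tauto. Qed.

Lemma ht_sym rho A B : ht_equiv I u rho A B -> ht_equiv I u rho B A.
Proof. unfold ht_equiv; tauto. Qed.

Lemma ht_trans rho A B C :
  ht_equiv I u rho A B -> ht_equiv I u rho B C -> ht_equiv I u rho A C.
Proof. unfold ht_equiv; tauto. Qed.

Lemma ht_quant rho q x A B :
  (forall d, ht_equiv I u (upd rho x d) A B) ->
  ht_equiv I u rho (FQ q x A) (FQ q x B).
Proof. unfold ht_equiv; destruct q; simpl; firstorder. Qed.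

Ltac destruct_matches :=
  repeat match goal with |- context [match ?t with _ => _ end] => destruct t end.

Ltac simp_step G1 G2 rho :=
  cbn [simp]; generalize (simp G1) (simp G2); intros a b;
  (* [top -> b] becomes [b]; this preserves [b*] only because [b*] implies [b]. *)
  pose proof (sat_star_sat b rho); destruct_matches;
  first [ split; reflexivity | unfold ht_equiv; simpl in *; tauto ].

Lemma simp_ht G : forall rho, ht_equiv I u rho (simp G) G.
Proof.
  induction G; intro rho; try (split; reflexivity).
  - apply ht_trans with (FAnd (simp G1) (simp G2));
      [simp_step G1 G2 rho | now apply ht_and].
  - apply ht_trans with (FOr (simp G1) (simp G2));
      [simp_step G1 G2 rho | now apply ht_or].
  - apply ht_trans with (FImp (simp G1) (simp G2));
      [simp_step G1 G2 rho | now apply ht_imp].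
  - now apply ht_quant.
Qed.

Hypothesis Hrel : forall p xs, rel I p xs -> tuple_of (dom I) p xs.
Hypothesis Hcst : forall c, dom I (cst I c).

Lemma repl_ht x rho N : ~ dom I (rho x) -> qfree N -> ht_equiv I u rho (repl x N) N.
Proof.
  intros Hx. induction N; simpl; intros Hq.
  - split; reflexivity.
  - destruct (in_dec Nat.eq_dec x (flat_map term_vars ts)) as [Hin | _];
      [| split; reflexivity].
    assert (Hout : forall p, ~ rel I p (map (eval_term I rho) ts)).
    { intros p R. destruct (Hrel p _ R) as [_ Hall]. apply Hx.
      apply in_flat_map in Hin as [[y|c] [Ht Hy]]; simpl in Hy; [|contradiction].
      destruct Hy as [-> | []]. rewrite Forall_forall in Hall.
      apply Hall, (in_map (eval_term I rho) ts (TVar x)), Ht. }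
    unfold ht_equiv; destruct P; simpl; firstorder.
  - destruct t1 as [y|c], t2 as [z|d]; simpl; try (split; reflexivity);
      match goal with |- context [Nat.eq_dec ?a ?b] =>
        destruct (Nat.eq_dec a b) as [<- | _] end;
      simpl; try (split; reflexivity);
      unfold ht_equiv; simpl; split; split; try tauto; intro E; apply Hx;
      first [rewrite E | rewrite <- E]; apply Hcst.
  - destruct Hq. apply ht_and; auto.
  - destruct Hq. apply ht_or; auto.
  - destruct Hq. apply ht_imp; auto.
  - contradiction.
Qed.

Lemma wrestricted_ht s x rho G :
  ~ dom I (rho x) -> qfree G -> wrestricted s x G ->
  ht_equiv I u rho G (if s then FTop else FBot).
Proof.
  intros Hx Hq W. rewrite <- W.
  apply ht_sym, ht_trans with (repl x G); [apply simp_ht | apply repl_ht; auto].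
Qed.

Lemma wrestricted_oriented s x ra rb N :
  ~ dom I (rb x) -> qfree N -> wrestricted s x N ->
  oriented s (sat I u ra N) (sat I u rb N) /\
  oriented s (sat I u ra (star N)) (sat I u rb (star N)).
Proof.
  intros Hx Hq W. destruct (wrestricted_ht s x rb N Hx Hq W) as [E Es].
  destruct s; simpl in *; tauto.
Qed.

Lemma guarded_oriented x ra rb :
  agree_off x ra rb -> ~ dom I (rb x) ->
  forall N s, qfree N -> guarded s x N ->
  oriented s (sat I u ra N) (sat I u rb N) /\
  oriented s (sat I u ra (star N)) (sat I u rb (star N)).
Proof.
  intros Hag Hx N.
  induction N as [ | P ts | t1 t2 | N1 IHN1 N2 IHN2 | N1 IHN1 N2 IHN2 | N1 IHN1 N2 IHN2 | ];
    intros s Hq Hg;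
    match goal with |- context [sat I u ra ?M] =>
      destruct (classic (wrestricted s x M)) as [W | W] end;
    try (apply (wrestricted_oriented s x); assumption).
  - split; apply oriented_iff; reflexivity.
  - assert (Hfv : forall y, In y (free_vars (FPred P ts)) -> ra y = rb y).
    { intros y Hy. apply Hag. intros ->. exact (guarded_atom W Hg eq_refl Hy). }
    split; apply oriented_iff, sat_ext; auto using fv_star.
  - assert (Hfv : forall y, In y (free_vars (FEq t1 t2)) -> ra y = rb y).
    { intros y Hy. apply Hag. intros ->. exact (guarded_atom W Hg eq_refl Hy). }
    split; apply oriented_iff, sat_ext; auto.
  - destruct Hq as [Hq1 Hq2], (guarded_and W Hg) as [Hg1 Hg2].
    destruct (IHN1 s Hq1 Hg1), (IHN2 s Hq2 Hg2). destruct s; simpl in *; tauto.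
  - destruct Hq as [Hq1 Hq2], (guarded_or W Hg) as [Hg1 Hg2].
    destruct (IHN1 s Hq1 Hg1), (IHN2 s Hq2 Hg2). destruct s; simpl in *; tauto.
  - destruct Hq as [Hq1 Hq2], (guarded_imp W Hg) as [Hg1 Hg2].
    destruct (IHN1 _ Hq1 Hg1), (IHN2 s Hq2 Hg2). destruct s; simpl in *; tauto.
  - contradiction.
Qed.

End HereThere.

Section Extension.

Variables (U : Type) (I : interp U) (X : U -> Prop) (u : pconst -> list U -> Prop).
Hypothesis HX : forall d, dom I d -> X d.

Lemma sat_extension_qfree rho N :
  qfree N -> (sat (extension I X) u rho N <-> sat I u rho N).
Proof. induction N; simpl; tauto. Qed.

Lemma oriented_quantify s x Body :
  (forall ra rb, agree_off x ra rb -> ~ dom I (rb x) ->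
     oriented s (sat I u ra Body) (sat I u rb Body)) ->
  forall qs, ~ In x (map snd qs) ->
  forall ra rb, agree_off x ra rb -> ~ dom I (rb x) ->
  oriented s (sat I u ra (quantify qs Body)) (sat I u rb (quantify qs Body)).
Proof.
  intros HB qs. induction qs as [|[q y] qs IH]; intros Hn ra rb Hag Hx; simpl in *; auto.
  assert (K : forall d, oriented s (sat I u (upd ra y d) (quantify qs Body))
                                   (sat I u (upd rb y d) (quantify qs Body))).
  { intro d. apply IH; [tauto | |].
    - intros z Hz. unfold upd. destruct (Nat.eqb z y); auto.
    - unfold upd. rewrite (proj2 (Nat.eqb_neq x y)) by auto. exact Hx. }
  destruct q, s; simpl in *; firstorder.
Qed.

Lemma sat_extension_quantify Body d0 :
  dom I d0 -> qfree Body ->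
  forall qs, NoDup (map snd qs) ->
  (forall qx, In qx qs ->
     forall ra rb, agree_off (snd qx) ra rb -> ~ dom I (rb (snd qx)) ->
     oriented (universal (fst qx)) (sat I u ra Body) (sat I u rb Body)) ->
  forall rho, sat (extension I X) u rho (quantify qs Body) <-> sat I u rho (quantify qs Body).
Proof.
  intros Hd0 HqB qs. induction qs as [|[b x] qs IH]; intros Hnd Hor rho; simpl in *.
  - apply sat_extension_qfree; auto.
  - apply NoDup_cons_iff in Hnd as [Hnin Hnd].
    assert (IH' := IH Hnd (fun qx H => Hor qx (or_intror H))).
    assert (Hmove := oriented_quantify _ _ _ (Hor (b, x) (or_introl eq_refl)) qs Hnin).
    assert (Hag : forall d e, agree_off x (upd rho x d) (upd rho x e)).
    { intros d e z Hz. unfold upd. rewrite (proj2 (Nat.eqb_neq z x) Hz). reflexivity. }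
    assert (Hupd : forall e, upd rho x e x = e)
      by (intro; unfold upd; rewrite Nat.eqb_refl; auto).
    (* A value [e] outside the universe of [I] may be traded for [d0]. *)
    destruct b; simpl in Hmove |- *; setoid_rewrite IH'; split.
    + intros H d Hd. apply H, HX, Hd.
    + intros H e _. destruct (classic (dom I e)) as [De | De]; auto.
      apply (Hmove (upd rho x d0) (upd rho x e)); [apply Hag | rewrite Hupd; auto | auto].
    + intros [e [_ H]]. destruct (classic (dom I e)) as [De | De]; [exists e; auto |].
      exists d0. split; auto.
      apply (Hmove (upd rho x d0) (upd rho x e)); [apply Hag | rewrite Hupd; auto | auto].
    + intros [d [Hd H]]. exists d. auto.
Qed.

Lemma holds_extension_sentence G d0 :
  dom I d0 -> sentence G ->
  (forall rho, sat (extension I X) u rho G <-> sat I u rho G) ->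
  (holds (extension I X) u G <-> holds I u G).
Proof.
  intros Hd0 Hsent Heq. unfold holds. split.
  - intros H rho Hrho. apply Heq, H. intro n. apply HX, Hrho.
  - intros H rho _. apply Heq. apply (sat_ext I u G (fun _ => d0) rho).
    + unfold sentence in Hsent. rewrite Hsent. contradiction.
    + apply H. intro; exact Hd0.
Qed.

End Extension.

Lemma safe_guarded F :
  safe F ->
  sentence F /\ exists qs M, prenex F qs M /\
    forall qx, In qx qs -> guarded (universal (fst qx)) (snd qx) M.
Proof.
  intros [Hsent (qs & M & Hpre & _ & Hsafe)]. split; auto. exists qs, M. split; auto.
  intros qx Hin r Hr. destruct (Hsafe qx Hin r Hr) as (r1 & r2 & G & E & HG & W).
  exists r1, r2, G. repeat split; auto.
  rewrite <- Nat.negb_even in W.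
  destruct (fst qx), (Nat.even (ante_count M r1)); simpl in *; intuition discriminate.
Qed.

Lemma holds_extension_safe {U} (I : interp U) X u F :
  safe F -> wf_interp I -> (forall d, dom I d -> X d) -> below I u ->
  (holds (extension I X) u F <-> holds I u F) /\
  (holds (extension I X) u (star F) <-> holds I u (star F)).
Proof.
  intros Hsafe [[d0 Hd0] [Hcst Hrel]] HX Hu.
  destruct (safe_guarded F Hsafe) as (Hsent & qs & M & (-> & HqM & Hnd) & Hg).
  assert (Hor := fun qx Hin ra rb Hag Hx =>
    guarded_oriented U I u Hu Hrel Hcst (snd qx) ra rb Hag Hx M _ HqM (Hg qx Hin)).
  split; apply holds_extension_sentence with d0; auto using sentence_star.
  - apply sat_extension_quantify with d0; auto. apply Hor.
  - rewrite star_quantify. apply sat_extension_quantify with d0; auto using qfree_star.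
    apply Hor.
Qed.

Lemma sat_agree_on_preds {U} (J : interp U) u u' G :
  wf_formula G -> (forall p, In p (preds G) -> forall xs, u p xs <-> u' p xs) ->
  forall rho, (sat J u rho G <-> sat J u' rho G) /\
              (sat J u rho (star G) <-> sat J u' rho (star G)).
Proof.
  induction G as [ | [p|p] ts | | G1 IH1 G2 IH2 | G1 IH1 G2 IH2 | G1 IH1 G2 IH2 | q x G IH];
    simpl; intros Hw Hp rho; try tauto.
  1: split; [tauto | apply Hp; auto].
  4: destruct q; simpl; firstorder.
  all: destruct Hw as [W1 W2];
    destruct (IH1 W1 (fun p Hin => Hp p (in_or_app _ _ _ (or_introl Hin))) rho);
    destruct (IH2 W2 (fun p Hin => Hp p (in_or_app _ _ _ (or_intror Hin))) rho); tauto.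
Qed.

Definition has_smaller_star_model {U} (I : interp U) (F : formula) : Prop :=
  exists u, below I u /\ ~ (forall p, In p (preds F) -> forall xs, rel I p xs -> u p xs) /\
            holds I u (star F).

Lemma stable_model_iff_below {U} (I : interp U) F :
  wf_formula F -> (forall p xs, rel I p xs -> tuple_of (dom I) p xs) ->
  stable_model I F <-> holds I (fun _ _ => False) F /\ ~ has_smaller_star_model I F.
Proof.
  intros Hwf Hrel. unfold stable_model. apply and_iff_compat_l, not_iff_compat. split.
  - intros (u & Hut & [Hle Hneq] & Hstar).
    exists (fun p xs => u p xs /\ rel I p xs). split; [intros p xs []; auto |]. split.
    + intro Hall. apply Hneq. intros p Hp xs Ht. split; [apply Hle; auto |].
      intro R. apply (Hall p Hp xs R).
    + assert (Hagree : forall p, In p (preds F) ->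
                forall xs, u p xs <-> u p xs /\ rel I p xs).
      { intros p Hp xs. split; [| tauto].
        intro H. split; [exact H | exact (Hle p Hp xs (Hut p xs H) H)]. }
      intros rho Hrho. apply (sat_agree_on_preds I _ _ F Hwf Hagree rho), Hstar, Hrho.
  - intros (u & Hu & Hstrict & Hstar). exists u.
    split; [intros p xs H; apply Hrel, Hu, H |]. split; auto.
    split; [intros p _ xs _; apply Hu |].
    intro Heq. apply Hstrict. intros p Hp xs R. apply (Heq p Hp xs); auto.
Qed.

Theorem proposition5 :
  forall (F : formula), wf_formula F -> safe F ->
  forall (U : Type) (I : interp U) (X : U -> Prop),
    wf_interp I ->
    (forall d, dom I d -> X d) ->
    (stable_model (extension I X) F <-> stable_model I F).
Proof.
  intros F Hwf Hsafe U I X Hwi HX.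
  assert (Hext := fun u => holds_extension_safe I X u F Hsafe Hwi HX).
  destruct Hwi as (_ & _ & Hrel).
  assert (HrelX : forall p xs, rel (extension I X) p xs -> tuple_of X p xs).
  { intros p xs R. destruct (Hrel p xs R) as [L Hall].
    split; [exact L | eapply Forall_impl; eauto]. }
  rewrite (stable_model_iff_below _ F Hwf HrelX), (stable_model_iff_below I F Hwf Hrel).
  assert (Hempty : below I (fun _ _ => False)) by (intros p xs []).
  rewrite (proj1 (Hext _ Hempty)).
  apply and_iff_compat_l, not_iff_compat.
  split; intros (u & Hu & Hstrict & Hstar); exists u; repeat split; auto;
    apply (Hext u Hu); auto.
Qed.
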